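(* Let $T$ be a $C_{p^rq^s}$-transfer system with exactly two connected components. Then $T$ is lesser simply paired if and only if the connected component of $(0,0)$ is $V_0=\{(0,j):0\le j\le s\}$ or $H_0=\{(i,0):0\le i\le r\}$. In that case $\mathrm{Hull}(T)\ne T_c$, so $(T,\mathrm{Hull}(T))$ and $(T,T_c)$ are two distinct compatible pairs and are the only compatible pairs with first entry $T$.
   Context: $p,q$ are distinct primes and $r,s\ge 0$ integers. The subgroups of $C_{p^rq^s}$ are identified with grid points $(i,j)$, $0\le i\le r$, $0\le j\le s$, where $(i,j)$ stands for $C_{p^iq^j}$ (intersection is coordinatewise minimum). A $C_{p^rq^s}$-transfer system is a partial order $\to$ on these vertices such that: $(i_1,j_1)\to(i_2,j_2)$ implies $i_1\le i_2$, $j_1\le j_2$; it is reflexive and transitive; and $(i_1,j_1)\to(i_2,j_2)$ implies $(\min\{i_1,a\},\min\{j_1,b\})\to(\min\{i_2,a\},\min\{j_2,b\})$ for every vertex $(a,b)$. Connected components are those of the underlying undirected graph. A transfer system is saturated if whenever $L\le K\le H$ and $L\to H$ is in it then $K\to H$ is in it; $\mathrm{Hull}(T)$ is the smallest saturated transfer system containing $T$; $T_c$ is the complete transfer system (all $K\to H$ with $K\le H$). A pair $(T,T')$ is compatible if $T\subseteq T'$ and for all subgroups $A,B,C$ with $B,C\le A$: if $B\to A$ is in $T$ and $B\cap C\to B$ is in $T'$ then $C\to A$ is in $T'$. $T$ is lesser simply paired if for every transfer system $T'\supseteq T$, $(T,T')$ is compatible iff $T'\in\{\mathrm{Hull}(T),T_c\}$.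 *)

From mathcomp Require Import all_boot.
Set Implicit Arguments.
Unset Strict Implicit.
Unset Printing Implicit Defensive.

(* Subgroups of C_{p^r q^s}: grid points (i,j), 0<=i<=r, 0<=j<=s;
   (i,j) stands for C_{p^i q^j}. *)
Definition vert (r s : nat) : finType := ('I_r.+1 * 'I_s.+1)%type.

Definition vle {r s : nat} (x y : vert r s) : bool :=
  (x.1 <= y.1)%N && (x.2 <= y.2)%N.

Definition vmeet {r s : nat} (x y : vert r s) : vert r s :=
  (inord (minn x.1 y.1), inord (minn x.2 y.2)).

(* A relation on subgroups, as a set of pairs (K,H) meaning K -> H *)
Definition is_transfer {r s : nat} (T : {set vert r s * vert r s}) : bool :=
  [&& [forall x : vert r s, forall y : vert r s, ((x, y) \in T) ==> vle x y],
      [forall x : vert r s, (x, x) \in T],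
      [forall x : vert r s, forall y : vert r s, forall z : vert r s,
         ((x, y) \in T) && ((y, z) \in T) ==> ((x, z) \in T)] &
      [forall x : vert r s, forall y : vert r s, forall c : vert r s,
         ((x, y) \in T) ==> ((vmeet x c, vmeet y c) \in T)]].

Definition uedge {r s : nat} (T : {set vert r s * vert r s}) : rel (vert r s) :=
  fun x y => ((x, y) \in T) || ((y, x) \in T).

Definition ccomp {r s : nat} (T : {set vert r s * vert r s}) (x : vert r s)
  : {set vert r s} := [set y | connect (uedge T) x y].

Definition ncomp {r s : nat} (T : {set vert r s * vert r s}) : nat :=
  #|[set ccomp T x | x : vert r s]|.

Definition saturated {r s : nat} (T : {set vert r s * vert r s}) : bool :=
  [forall L : vert r s, forall K : vert r s, forall H : vert r s,
     [&& vle L K, vle K H & (L, H) \in T] ==> ((K, H) \in T)].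

Definition Hull {r s : nat} (T : {set vert r s * vert r s})
  : {set vert r s * vert r s} :=
  \bigcap_(S : {set vert r s * vert r s} |
             [&& is_transfer S, saturated S & T \subset S]) S.

Definition Tc (r s : nat) : {set vert r s * vert r s} :=
  [set xy : vert r s * vert r s | vle xy.1 xy.2].

Definition compatible {r s : nat} (T T' : {set vert r s * vert r s}) : Prop :=
  T \subset T' /\
  forall A B C : vert r s, vle B A -> vle C A ->
    (B, A) \in T -> (vmeet B C, B) \in T' -> (C, A) \in T'.

Definition lesser_simply_paired {r s : nat} (T : {set vert r s * vert r s})
  : Prop :=
  forall T' : {set vert r s * vert r s}, is_transfer T' -> T \subset T' ->
    (compatible T T' <-> (T' = Hull T \/ T' = Tc r s)).

Definition origin (r s : nat) : vert r s := (ord0, ord0).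
Definition V0 (r s : nat) : {set vert r s} := [set x : vert r s | x.1 == ord0].
Definition H0 (r s : nat) : {set vert r s} := [set x : vert r s | x.2 == ord0].

From mathcomp Require Import all_boot zify.
Set Implicit Arguments.
Unset Strict Implicit.
Unset Printing Implicit Defensive.

(* The component of the origin is closed downwards (meet a path from the
   origin with a vertex), so with two components the other one is the up-set
   of a vertex [m] and the origin's component is its complement.  Each
   component has a least element, the origin resp. [m], which transfers to
   all of it; hence Hull T is the set of all [x <= y] on one side of [m], and
   every compatible partner of T contains it.  If [m] is an atom, i.e.
   (1,0) or (0,1), any transfer of a partner crossing the sides meets with [m]
   down to [origin -> m], and compatibility with [m -> A] then yields every
   crossing transfer, so the partner is complete.  If [origin < z < m], adding the
   transfers out of all vertices meeting [m] trivially gives a third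
   compatible partner. *)

Section Grid.
Variables r s : nat.
Local Notation o := (origin r s).
Implicit Types x y z c : vert r s.

Lemma vmeet1 x c : ((vmeet x c).1 : nat) = minn x.1 c.1.
Proof. by rewrite /vmeet /= inordK // ltnS geq_min -ltnS ltn_ord. Qed.

Lemma vmeet2 x c : ((vmeet x c).2 : nat) = minn x.2 c.2.
Proof. by rewrite /vmeet /= inordK // ltnS geq_min -ltnS ltn_ord. Qed.

Lemma vert_eq x y : (x.1 : nat) = y.1 -> (x.2 : nat) = y.2 -> x = y.
Proof. by case: x y => [a b] [c d] /= h1 h2; congr pair; apply: val_inj. Qed.

Lemma vmeetC x y : vmeet x y = vmeet y x.
Proof. by apply: vert_eq; rewrite !(vmeet1, vmeet2) minnC. Qed.

Lemma vle_refl x : vle x x.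
Proof. by rewrite /vle !leqnn. Qed.

Lemma vle_trans y x z : vle x y -> vle y z -> vle x z.
Proof. rewrite /vle => /andP[? ?] /andP[? ?]; apply/andP; split; lia. Qed.

Lemma vle_anti x y : vle x y -> vle y x -> x = y.
Proof. rewrite /vle => /andP[? ?] /andP[? ?]; apply: vert_eq; lia. Qed.

Lemma vle0x x : vle o x.
Proof. by []. Qed.

Lemma vlex0 x : vle x o -> x = o.
Proof. by move=> /vle_anti; apply. Qed.

Lemma vlexI x y c : vle x (vmeet y c) = vle x y && vle x c.
Proof. rewrite /vle vmeet1 vmeet2; apply/idP/idP => /andP[]; try case/andP; lia. Qed.

Lemma vle_meetl x c : vle (vmeet x c) x.
Proof. by rewrite /vle vmeet1 vmeet2 !geq_minl. Qed.

Lemma vle_meetr x c : vle (vmeet x c) c.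
Proof. by rewrite /vle vmeet1 vmeet2 !geq_minr. Qed.

Lemma vmeetSl x y c : vle x y -> vle (vmeet x c) (vmeet y c).
Proof. by move=> xy; rewrite vlexI vle_meetr (vle_trans (vle_meetl x c) xy). Qed.

Lemma vmeet_l x y : vle x y -> vmeet x y = x.
Proof. by move=> xy; apply: vle_anti; rewrite ?vle_meetl // vlexI vle_refl. Qed.

Lemma vmeet_r x y : vle y x -> vmeet x y = y.
Proof. by move=> yx; apply: vle_anti; rewrite ?vle_meetr // vlexI yx vle_refl. Qed.

Lemma vmeet_eq0_le x y c : vle x y -> vmeet y c = o -> vmeet x c = o.
Proof. by move=> xy yc0; apply: vlex0; rewrite -yc0 vmeetSl. Qed.

Definition atom m := forall z, vle z m -> z = o \/ z = m.

Lemma atomP m : m != o ->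
  atom m <-> ((m.1 : nat) = 1 /\ (m.2 : nat) = 0 \/ (m.1 : nat) = 0 /\ (m.2 : nat) = 1).
Proof.
move=> m0; have m0' : (m.1 : nat) != 0 \/ (m.2 : nat) != 0.
  by apply/orP; rewrite -negb_and; apply: contra m0 => /andP[/eqP h1 /eqP h2]; apply/eqP/vert_eq.
split=> [at_m | hm z zm].
  have [r1 | s1] := m0'.
    have r_gt0 : (0 < r)%N by have := ltn_ord m.1; lia.
    have e_le : vle (inord 1, ord0) m by rewrite /vle /= inordK // lt0n r1.
    case: (at_m _ e_le) => [/(congr1 (fun v : vert r s => (v.1 : nat)))|<-] /=; rewrite inordK //.
    by left.
  have s_gt0 : (0 < s)%N by have := ltn_ord m.2; lia.
  have e_le : vle (ord0, inord 1) m by rewrite /vle /= inordK // lt0n s1.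
  case: (at_m _ e_le) => [/(congr1 (fun v : vert r s => (v.2 : nat)))|<-] /=; rewrite inordK //.
  by right.
case: hm => -[m1 m2]; move: zm; rewrite /vle m1 m2 => /andP[z1 z2].
  have z2' : (z.2 : nat) = 0 by lia.
  have [z1' | z1'] : (z.1 : nat) = 0 \/ (z.1 : nat) = 1 by lia.
    by left; apply: vert_eq; rewrite ?z1' ?z2'.
  by right; apply: vert_eq; rewrite ?z1' ?z2' ?m1 ?m2.
have z1' : (z.1 : nat) = 0 by lia.
have [z2' | z2'] : (z.2 : nat) = 0 \/ (z.2 : nat) = 1 by lia.
  by left; apply: vert_eq; rewrite ?z1' ?z2'.
by right; apply: vert_eq; rewrite ?z1' ?z2' ?m1 ?m2.
Qed.

Lemma upset_compl_V0 m :
  [set x | ~~ vle m x] = V0 r s <-> (m.1 : nat) = 1 /\ (m.2 : nat) = 0.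
Proof.
split=> [/setP hV | [m1 m2]]; last first.
  by apply/setP => x; rewrite !inE /vle m1 m2 -val_eqE /=; case: (x.1 : nat).
have hx x : ~~ vle m x = ((x.1 : nat) == 0%N) by move: (hV x); rewrite !inE -val_eqE.
have m1 : (m.1 : nat) != 0%N by rewrite -hx vle_refl.
have r_gt0 : (0 < r)%N by have := ltn_ord m.1; lia.
have := hx (inord 1, ord0); rewrite /vle /= inordK // => /negbFE/andP[m1le m2le].
by split; apply/eqP; rewrite eqn_leq ?m1le ?m2le ?lt0n.
Qed.

Lemma upset_compl_H0 m :
  [set x | ~~ vle m x] = H0 r s <-> (m.1 : nat) = 0 /\ (m.2 : nat) = 1.
Proof.
split=> [/setP hH | [m1 m2]]; last first.
  by apply/setP => x; rewrite !inE /vle m1 m2 -val_eqE /=; case: (x.2 : nat).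
have hx x : ~~ vle m x = ((x.2 : nat) == 0%N) by move: (hH x); rewrite !inE -val_eqE.
have m2 : (m.2 : nat) != 0%N by rewrite -hx vle_refl.
have s_gt0 : (0 < s)%N by have := ltn_ord m.2; lia.
have := hx (ord0, inord 1); rewrite /vle /= inordK // => /negbFE/andP[m1le m2le].
by split; apply/eqP; rewrite eqn_leq ?m1le ?m2le ?lt0n.
Qed.

Lemma atom_upset_compl m : m != o ->
  atom m <-> [set x | ~~ vle m x] = V0 r s \/ [set x | ~~ vle m x] = H0 r s.
Proof.
move=> m0; apply: iff_trans (atomP m0) _.
by split=> -[h | h]; by [left; apply/upset_compl_V0 | right; apply/upset_compl_H0].
Qed.

End Grid.

Section Transfer.
Variables r s : nat.
Implicit Types (x y z c : vert r s) (U : {set vert r s * vert r s}).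

Lemma is_transferP U :
  reflect [/\ forall x y, (x, y) \in U -> vle x y,
              forall x, (x, x) \in U,
              forall x y z, (x, y) \in U -> (y, z) \in U -> (x, z) \in U &
              forall x y c, (x, y) \in U -> (vmeet x c, vmeet y c) \in U]
          (is_transfer U).
Proof.
apply: (iffP and4P) => -[h1 h2 h3 h4]; split.
- by move=> x y; move/forallP/(_ x)/forallP/(_ y)/implyP: h1.
- exact/forallP.
- by move=> x y z xy yz; move/forallP/(_ x)/forallP/(_ y)/forallP/(_ z)/implyP: h3; apply; rewrite xy.
- by move=> x y c; move/forallP/(_ x)/forallP/(_ y)/forallP/(_ c)/implyP: h4.
- by apply/forallP=> x; apply/forallP=> y; apply/implyP/h1.
- exact/forallP.
- by apply/forallP=> x; apply/forallP=> y; apply/forallP=> z; apply/implyP => /andP[]; apply: h3.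
- by apply/forallP=> x; apply/forallP=> y; apply/forallP=> c; apply/implyP/h4.
Qed.

Lemma saturatedP U :
  reflect (forall L K H, vle L K -> vle K H -> (L, H) \in U -> (K, H) \in U)
          (saturated U).
Proof.
apply: (iffP forallP) => [sat L K H LK KH LH | sat L].
  by move/forallP/(_ K)/forallP/(_ H)/implyP: (sat L); apply; rewrite LK KH LH.
by apply/forallP=> K; apply/forallP=> H; apply/implyP => /and3P[]; apply: sat.
Qed.

Variable U : {set vert r s * vert r s}.
Hypothesis trU : is_transfer U.

Lemma transfer_le x y : (x, y) \in U -> vle x y.
Proof. by case/is_transferP: trU => h _ _ _; apply: h. Qed.

Lemma transfer_refl x : (x, x) \in U.
Proof. by case/is_transferP: trU => _ h _ _. Qed.

Lemma transfer_trans y x z : (x, y) \in U -> (y, z) \in U -> (x, z) \in U.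
Proof. by case/is_transferP: trU => _ _ h _; apply: h. Qed.

Lemma transfer_meet c x y : (x, y) \in U -> (vmeet x c, vmeet y c) \in U.
Proof. by case/is_transferP: trU => _ _ _; apply. Qed.

Lemma compatible_Tc : compatible U (Tc r s).
Proof.
split; last by move=> A B C _ CA _ _; rewrite inE.
by apply/subsetP => -[x y] /transfer_le xy; rewrite inE.
Qed.

End Transfer.

Section Components.
Variables r s : nat.
Variable T : {set vert r s * vert r s}.
Hypothesis trT : is_transfer T.
Local Notation o := (origin r s).
Local Notation conn := (connect (uedge T)).
Implicit Types x y z c : vert r s.

Lemma uedge_sym : symmetric (uedge T).
Proof. by move=> x y; rewrite /uedge orbC. Qed.

Lemma conn_sym : connect_sym (uedge T).
Proof. exact: sym_connect_sym uedge_sym. Qed.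

Lemma conn_meet c x y : conn x y -> conn (vmeet x c) (vmeet y c).
Proof.
move=> /connectP[p xp ->]; elim: p x xp => [|z p IHp] x /=; first by rewrite connect0.
case/andP=> /orP xz zp; apply: connect_trans (IHp _ zp); apply: connect1.
by case: xz => /(transfer_meet trT c) e; rewrite /uedge e ?orbT.
Qed.

Lemma conn_meet_self x y : conn x y -> conn x (vmeet y x).
Proof. by move/(conn_meet x); rewrite vmeet_l ?vle_refl. Qed.

Lemma conn_origin_down x y : conn o y -> vle x y -> conn o x.
Proof. by move=> oy xy; move: (conn_meet x oy); rewrite vmeet_l ?vle0x // vmeet_r. Qed.

(* A backward edge [(v, u)] after [(a, u)]: meeting both with [v] gives [(a, v)], as [a <= v <= u]. *)
Lemma transfer_from_min a : (forall v, conn a v -> vle a v) ->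
  forall v, conn a v -> (a, v) \in T.
Proof.
move=> a_min v /connectP[p ap ->] {v}.
elim/last_ind: p ap => [|p u IHp] /=; first by rewrite transfer_refl.
rewrite rcons_path last_rcons => /andP[ap pu]; have au := IHp ap.
have a_le_u : vle a u.
  by apply: a_min; apply/connectP; exists (rcons p u); rewrite ?rcons_path ?ap ?pu ?last_rcons.
case/orP: pu => [e | e]; first exact: transfer_trans au e.
by move: (transfer_meet trT u au); rewrite vmeet_l // vmeet_r // (transfer_le trT e).
Qed.

Lemma eq_ccomp x y : (ccomp T x == ccomp T y) = conn x y.
Proof.
apply/eqP/idP => [e | xy]; last first.
  by apply/setP => z; rewrite !inE (same_connect conn_sym xy).
have : y \in ccomp T y by rewrite inE connect0.
by rewrite -e inE.
Qed.

Hypothesis ncomp2 : ncomp T = 2.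

Lemma ncomp2_disconnected x : exists y, ~~ conn x y.
Proof.
have [/existsP // | /existsPn all_conn] := boolP [exists y, ~~ conn x y].
have all_eq y : ccomp T y = ccomp T x.
  by apply/eqP; rewrite eq_ccomp conn_sym; move: (all_conn y); rewrite negbK.
suff : ncomp T = 1 by rewrite ncomp2.
rewrite /ncomp -(cards1 (ccomp T x)); congr #|pred_of_set _|.
by apply/setP => A; rewrite inE; apply/imsetP/eqP => [[y _ ->] | ->]; [exact: all_eq | exists x].
Qed.

Lemma ncomp2_connE z x y : conn x y = (conn z x == conn z y).
Proof.
have [zx | zx] := boolP (conn z x); have [zy | zy] := boolP (conn z y) => /=.
- by apply: connect_trans zy; rewrite conn_sym.
- by apply: contraNF zy; apply: connect_trans zx.
- by apply: contraNF zx => xy; apply: connect_trans zy _; rewrite conn_sym.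
apply/negPn/negP => xy; suff : (3 <= ncomp T)%N by rewrite ncomp2.
have <- : #|ccomp T z |: [set ccomp T x; ccomp T y]| = 3.
  by rewrite cardsU1 cards2 !inE negb_or !eq_ccomp zx zy xy.
apply: subset_leq_card; apply/subsetP => A; rewrite !inE.
by case/or3P => /eqP ->; apply: imset_f.
Qed.

(* [m] is chosen of least height outside the component of the origin. *)
Lemma ncomp2_split : exists2 m, m != o & forall x y, conn x y = (vle m x == vle m y).
Proof.
have [y0 oy0] := ncomp2_disconnected o.
have [m om m_min] := @arg_minnP _ y0 (fun x => ~~ conn o x) (fun x => x.1 + x.2)%N oy0.
have connE x : conn o x = ~~ vle m x.
  apply/idP/idP => [ox | ]; first by apply: contra om; apply: conn_origin_down.
  apply: contraR => ox; have mx : conn m x by rewrite (ncomp2_connE o) (negbTE om) (negbTE ox).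
  have oxm : ~~ conn o (vmeet x m).
    by move: (conn_meet_self mx); rewrite (ncomp2_connE o) (negbTE om) => /eqP <-.
  by have := m_min _ oxm; rewrite vmeet1 vmeet2 /vle => ?; apply/andP; split; lia.
exists m; first by apply: contraNneq om => ->; apply: connect0.
by move=> x y; rewrite (ncomp2_connE o) !connE; case: (vle m x); case: (vle m y).
Qed.

End Components.

Section TwoComponents.
Variables r s : nat.
Variable T : {set vert r s * vert r s}.
Hypothesis trT : is_transfer T.
Local Notation o := (origin r s).
Local Notation conn := (connect (uedge T)).
Implicit Types x y z c : vert r s.

Variable m : vert r s.
Hypothesis m_neq0 : m != o.
Hypothesis connE : forall x y, conn x y = (vle m x == vle m y).

Definition Ssplit : {set vert r s * vert r s} :=
  [set xy | vle xy.1 xy.2 && (vle m xy.1 == vle m xy.2)].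

(* When [m] is not an atom, a compatible partner of [T] strictly between [Ssplit] and [Tc]. *)
Definition Sdisj : {set vert r s * vert r s} :=
  [set xy | vle xy.1 xy.2 && ((vle m xy.1 == vle m xy.2) || (vmeet xy.1 m == o))].

Lemma in_Ssplit x y : ((x, y) \in Ssplit) = vle x y && (vle m x == vle m y).
Proof. by rewrite inE. Qed.

Lemma in_Sdisj x y :
  ((x, y) \in Sdisj) = vle x y && ((vle m x == vle m y) || (vmeet x m == o)).
Proof. by rewrite inE. Qed.

Lemma vle_m0 : vle m o = false.
Proof. by apply: contraNF m_neq0 => /vlex0 ->. Qed.

Lemma vle_m_up x y : vle x y -> vle m x -> vle m y.
Proof. by move=> xy mx; apply: vle_trans xy. Qed.

Lemma transfer_sub_Ssplit : T \subset Ssplit.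
Proof.
apply/subsetP => -[x y] xy; rewrite in_Ssplit (transfer_le trT xy) -connE.
by apply: connect1; rewrite /uedge xy.
Qed.

Lemma transfer_origin y : ~~ vle m y -> (o, y) \in T.
Proof.
move=> my; apply: (transfer_from_min trT) => [v _ |]; first exact: vle0x.
by rewrite connE vle_m0 (negbTE my).
Qed.

Lemma transfer_m y : vle m y -> (m, y) \in T.
Proof.
move=> my; apply: (transfer_from_min trT) => [v |]; last by rewrite connE my vle_refl.
by rewrite connE vle_refl => /eqP <-.
Qed.

Lemma Ssplit_transfer : is_transfer Ssplit.
Proof.
apply/is_transferP; split=> [x y | x | x y z | x y c]; rewrite ?in_Ssplit.
- by case/andP.
- by rewrite vle_refl eqxx.
- by case/andP=> xy /eqP-> /andP[yz /eqP->]; rewrite (vle_trans xy yz) eqxx.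
- by case/andP=> xy /eqP e; rewrite vmeetSl // !vlexI e eqxx.
Qed.

Lemma Ssplit_saturated : saturated Ssplit.
Proof.
apply/saturatedP => L K H LK KH; rewrite !in_Ssplit KH => /andP[_ /eqP eLH].
have [mH | mH] := boolP (vle m H); first by rewrite (vle_trans _ LK) // eLH.
by rewrite (contraNF (vle_m_up KH) mH).
Qed.

Lemma Hull_Ssplit : Hull T = Ssplit.
Proof.
apply/eqP; rewrite eqEsubset; apply/andP; split.
  by apply: bigcap_inf; rewrite Ssplit_transfer Ssplit_saturated transfer_sub_Ssplit.
apply/bigcapsP => U /and3P[_ /saturatedP satU TU]; apply/subsetP => -[x y].
rewrite in_Ssplit => /andP[xy /eqP e].
have [my | my] := boolP (vle m y).
  by apply: (satU m); rewrite ?e // (subsetP TU) ?transfer_m.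
by apply: (satU o); rewrite ?vle0x // (subsetP TU) ?transfer_origin.
Qed.

Lemma Hull_neq_Tc : Hull T != Tc r s.
Proof.
rewrite Hull_Ssplit; apply/negP => /eqP e.
have : (o, m) \in Tc r s by rewrite inE.
by rewrite -e in_Ssplit vle_m0 vle_refl.
Qed.

Lemma compatible_Ssplit : compatible T Ssplit.
Proof.
split=> [|A B C BA CA BAT]; first exact: transfer_sub_Ssplit.
move: (subsetP transfer_sub_Ssplit _ BAT); rewrite !in_Ssplit CA => /andP[_ /eqP eBA].
rewrite vle_meetl vlexI /= => /eqP eBC.
have [mA | mA] := boolP (vle m A); last by rewrite (contraNF (vle_m_up CA) mA).
by move: eBC; rewrite eBA mA /= => ->.
Qed.

Lemma Ssplit_sub_compatible U : compatible T U -> Ssplit \subset U.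
Proof.
case=> TU comp; have reflU z : (z, z) \in U by rewrite (subsetP TU) ?transfer_refl.
apply/subsetP => -[x y]; rewrite in_Ssplit => /andP[xy /eqP e].
have [my | my] := boolP (vle m y).
  by apply: (comp y m x) => //; rewrite ?transfer_m // vmeet_l ?e.
by apply: (comp y o x) => //; rewrite ?transfer_origin // vmeet_l.
Qed.

Lemma compatible_atom U : atom m -> is_transfer U -> compatible T U ->
  U = Ssplit \/ U = Tc r s.
Proof.
move=> at_m trU compU; have SU := Ssplit_sub_compatible compU.
have [US | /subsetPn[[x y] xyU xyS]] := boolP (U \subset Ssplit).
  by left; apply/eqP; rewrite eqEsubset US.
have xy := transfer_le trU xyU.
have [mx my] : ~~ vle m x /\ vle m y.
  move: xyS; rewrite in_Ssplit xy; have [mx | mx] := boolP (vle m x).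
    by rewrite (vle_m_up xy mx).
  by case: (vle m y).
have meet_m z : ~~ vle m z -> vmeet z m = o.
  move=> mz; case: (at_m _ (vle_meetr z m)) => // e.
  by move: (vle_meetl z m); rewrite e (negbTE mz).
have omU : (o, m) \in U by move: (transfer_meet trU m xyU); rewrite meet_m // vmeet_r.
right; apply/eqP; rewrite eqEsubset; apply/andP; split.
  by apply/subsetP => -[a b] /(transfer_le trU) ab; rewrite inE.
apply/subsetP => -[C A]; rewrite inE /= => CA.
have [mA | mA] := boolP (vle m A); last first.
  by apply: (subsetP SU); rewrite in_Ssplit CA (negbTE mA) (contraNF (vle_m_up CA) mA).
have [mC | mC] := boolP (vle m C); first by apply: (subsetP SU); rewrite in_Ssplit CA mA mC.
by case: compU => _ comp; apply: (comp A m C) => //; rewrite ?transfer_m // vmeetC meet_m.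
Qed.

Lemma Sdisj_transfer : is_transfer Sdisj.
Proof.
apply/is_transferP; split=> [x y | x | x y z | x y c]; rewrite ?in_Sdisj.
- by case/andP.
- by rewrite vle_refl eqxx.
- case/andP=> xy hxy /andP[yz hyz]; rewrite (vle_trans xy yz) /=.
  case/orP: hxy => [/eqP exy | x0]; last by rewrite x0 orbT.
  case/orP: hyz => [/eqP eyz | y0]; first by rewrite exy eyz eqxx.
  by rewrite (vmeet_eq0_le xy (eqP y0)) eqxx orbT.
- case/andP=> xy hxy; rewrite vmeetSl //=.
  case/orP: hxy => [/eqP e | x0]; first by rewrite !vlexI e eqxx.
  by rewrite (vmeet_eq0_le (vle_meetl x c) (eqP x0)) eqxx orbT.
Qed.

Lemma compatible_Sdisj : compatible T Sdisj.
Proof.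
split=> [|A B C BA CA BAT].
  apply: subset_trans transfer_sub_Ssplit _.
  by apply/subsetP => -[x y]; rewrite in_Ssplit in_Sdisj => /andP[-> ->].
move: (subsetP transfer_sub_Ssplit _ BAT); rewrite in_Ssplit => /andP[_ /eqP eBA].
rewrite !in_Sdisj CA vle_meetl vlexI /=.
have [mA | mA] := boolP (vle m A); last by rewrite (contraNF (vle_m_up CA) mA).
have mB : vle m B by rewrite eBA.
rewrite eBA mA /= => /orP[/eqP-> // | BC0]; apply/orP; right.
(* [m <= B] puts [vmeet C m] below [vmeet (vmeet B C) m], which is the origin *)
apply/eqP; apply: vlex0; rewrite -(eqP BC0) !vlexI vle_meetl vle_meetr !andbT.
exact: vle_trans (vle_meetr C m) mB.
Qed.

Lemma lesser_simply_paired_atom : lesser_simply_paired T -> atom m.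
Proof.
move=> lsp z zm; have [-> | z0] := eqVneq z o; first by left.
have [-> | zm'] := eqVneq z m; first by right.
have mz : ~~ vle m z by apply: contra zm' => mz; apply/eqP; apply: vle_anti.
have [TS _] := compatible_Sdisj.
case: ((lsp _ Sdisj_transfer TS).1 compatible_Sdisj) => e.
  have : (o, m) \in Sdisj by rewrite in_Sdisj vle0x vmeet_l ?vle0x ?eqxx ?orbT.
  by rewrite e Hull_Ssplit in_Ssplit vle_m0 vle_refl.
have : (z, m) \in Tc r s by rewrite inE.
by rewrite -e in_Sdisj zm vmeet_l // (negbTE z0) (negbTE mz) vle_refl.
Qed.

Lemma atom_lesser_simply_paired : atom m -> lesser_simply_paired T.
Proof.
move=> at_m U trU _; rewrite Hull_Ssplit; split; first exact: compatible_atom.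
by case=> ->; [exact: compatible_Ssplit | exact: compatible_Tc].
Qed.

End TwoComponents.

Theorem mainTheorem16 (p q r s : nat) (T : {set vert r s * vert r s}) :
  prime p -> prime q -> p != q ->
  is_transfer T -> ncomp T = 2 ->
  (lesser_simply_paired T <->
     (ccomp T (origin r s) = V0 r s \/ ccomp T (origin r s) = H0 r s)) /\
  ((ccomp T (origin r s) = V0 r s \/ ccomp T (origin r s) = H0 r s) ->
     [/\ Hull T != Tc r s,
         compatible T (Hull T),
         compatible T (Tc r s) &
         forall T' : {set vert r s * vert r s}, is_transfer T' ->
           compatible T T' -> T' = Hull T \/ T' = Tc r s]).
Proof.
move=> _ _ _ trT ncomp2.
have [m m0 connE] := ncomp2_split trT ncomp2.
have -> : ccomp T (origin r s) = [set x | ~~ vle m x].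
  by apply/setP => x; rewrite !inE connE (vle_m0 m0); case: vle.
have atomE := atom_upset_compl m0.
split; first exact: iff_trans (conj (lesser_simply_paired_atom trT m0 connE) (atom_lesser_simply_paired trT m0 connE)) atomE.
move=> /atomE at_m; have HS := Hull_Ssplit trT m0 connE.
split; first exact: (Hull_neq_Tc trT m0 connE).
- by rewrite HS; exact: (compatible_Ssplit trT connE).
- exact: (compatible_Tc trT).
- by move=> U trU; rewrite HS; exact: (compatible_atom trT m0 connE at_m trU).
Qed.
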